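(* Let $N\in\mathbb{N}$. Let $$\mathcal{B}(N)=\{(q_1,q_2)\in\mathbb{Z}^2\mid 4q_1^2+4q_2^2+4q_1q_2+2q_1+3q_2=N\},$$ let $\mathcal{U}(12N+7)=\{(x,y)\in\mathbb{Z}^2\mid x^2+3y^2=12N+7\}$, and let $\varphi:\mathcal{B}(N)\to\mathcal{U}(12N+7)$ be the (well-defined) map $\varphi(q_1,q_2)=(6q_2+2,\,4q_1+2q_2+1)$. Let the Klein four-group $V_4$ act on $\mathcal{U}(12N+7)$ by sign changes of each coordinate, i.e. its nontrivial elements send $(x,y)$ to $(-x,y)$, $(x,-y)$, $(-x,-y)$. Then: (1) the action of $V_4$ on $\mathcal{U}(12N+7)$ is free; (2) $\varphi(\mathcal{B}(N))$ is a complete set of representatives of the $V_4$-orbits of $\mathcal{U}(12N+7)$.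
   Context: The expression $4q_1^2+4q_2^2+4q_1q_2+2q_1+3q_2$ is the $\Lambda_0$-atomic length of the element $q=q_1\varepsilon_1+q_2\varepsilon_2-(q_1+q_2)\varepsilon_3$ of the lattice $M$ in affine type $D_4^{(3)}$, so $\mathcal{B}(N)$ parametrises the affine Grassmannian elements of type $D_4^{(3)}$ of atomic length $N$. *)

From mathcomp Require Import all_boot all_order all_algebra.
Set Implicit Arguments. Unset Strict Implicit. Unset Printing Implicit Defensive.
Import Order.TTheory GRing.Theory Num.Theory.
Local Open Scope ring_scope.

Definition inB (N : nat) (q : int * int) : Prop :=
  4 * q.1 ^+ 2 + 4 * q.2 ^+ 2 + 4 * q.1 * q.2 + 2 * q.1 + 3 * q.2 = N%:Z.

Definition inU (M : int) (p : int * int) : Prop :=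
  p.1 ^+ 2 + 3 * p.2 ^+ 2 = M.

Definition phi (q : int * int) : int * int :=
  (6 * q.2 + 2, 4 * q.1 + 2 * q.2 + 1).

(* The Klein four-group V4 = Z/2 x Z/2, realised as bool * bool (with
   componentwise xor as group law; (false,false) is the identity).
   (b1,b2) acts by changing the sign of x iff b1, of y iff b2. *)
Definition V4 := (bool * bool)%type.
Definition v4_one : V4 := (false, false).
Definition v4act (g : V4) (p : int * int) : int * int :=
  ((if g.1 then - p.1 else p.1), (if g.2 then - p.2 else p.2)).

Definition same_orbit (u v : int * int) : Prop := exists g : V4, v = v4act g u.

From mathcomp Require Import all_boot all_order all_algebra.
From mathcomp Require Import zify.
Set Implicit Arguments. Unset Strict Implicit. Unset Printing Implicit Defensive.
Import Order.TTheory GRing.Theory Num.Theory.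
Local Open Scope ring_scope.

(* Since [x + 3y = 12(q1 + q2) + 5] for [(x, y) = phi (q1, q2)], the image of
   [phi] is cut out by two congruences, [x = 2 mod 6] and [x + 3y = 5 mod 12].
   A point of U(M) with [M = 7 mod 12] has [x = 2, 4 mod 6] and [y] odd, so
   its coordinates are nonzero (freeness), and exactly one choice of the
   signs of [x] and [y] puts it into that congruence class. *)

Definition phi_class (p : int * int) : Prop :=
  (p.1 %% 6 = 2 /\ (p.1 + 3 * p.2) %% 12 = 5)%Z.

Lemma inU_phi N q : inU (12 * N%:Z + 7) (phi q) <-> inB N q.
Proof. case: q => a b; rewrite /inB /inU /phi /= !expr2; lia. Qed.

Lemma inU_v4act M g u : inU M u -> inU M (v4act g u).
Proof.
case: g u => [b1 b2] [x y]; rewrite /inU /v4act /=.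
by case: b1; case: b2; rewrite ?sqrrN.
Qed.

Lemma divz_decomp (x : int) (m : nat) :
  (0 < m)%N -> exists a (r : nat), (r < m)%N /\ x = a * m%:Z + r%:Z.
Proof. by move=> m_gt0; exists (x %/ m)%Z, (absz (x %% m)%Z); split; lia. Qed.

(* [x^2 mod 12] only depends on [x mod 6] and [y^2 mod 4] on [y mod 2]. *)
Lemma inU_mod M p : (M %% 12 = 7)%Z -> inU M p ->
  ((p.1 %% 6 = 2 \/ p.1 %% 6 = 4) /\ p.2 %% 2 = 1)%Z.
Proof.
case: p => x y; rewrite /inU /= => M7.
have [a [r [r_lt6 ->]]] := divz_decomp x (isT : (0 < 6)%N).
have [b [s [s_lt2 ->]]] := divz_decomp y (isT : (0 < 2)%N).
rewrite !expr2.
by case: r r_lt6 => [|[|[|[|[|[|r]]]]]] // _; case: s s_lt2 => [|[|s]] // _; lia.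
Qed.

Lemma v4act_free g (u : int * int) :
  u.1 != 0 -> u.2 != 0 -> v4act g u = u -> g = v4_one.
Proof.
case: g u => [b1 b2] [x y] /= x_neq0 y_neq0; rewrite /v4act /= => -[ex ey].
by case: b1 ex; case: b2 ey => //= *; lia.
Qed.

Lemma phi_classP p : phi_class p <-> exists q, p = phi q.
Proof.
case: p => x y; rewrite /phi_class /=.
split => [[x6 xy12] | [[a b] [-> ->]]]; last by split; lia.
exists (((x + 3 * y - 5) %/ 12)%Z - ((x - 2) %/ 6)%Z, ((x - 2) %/ 6)%Z).
by rewrite /phi /=; congr pair; lia.
Qed.

Lemma v4act_into_phi_class (p : int * int) :
  (p.1 %% 6 = 2 \/ p.1 %% 6 = 4)%Z -> (p.2 %% 2 = 1)%Z ->
  exists g, phi_class (v4act g p).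
Proof.
case: p => x y /= x6 y_odd.
have [b1 x'6] : exists b1 : bool, ((if b1 then - x else x) %% 6 = 2)%Z.
  by case: x6 => x6; [exists false | exists true]; lia.
suff [b2 xy12] : exists b2 : bool,
    (((if b1 then - x else x) + 3 * (if b2 then - y else y)) %% 12 = 5)%Z.
  by exists (b1, b2); split.
move: (if b1 then _ else _) x'6 => x' x'6.
have [] : ((x' + 3 * y) %% 12 = 5 \/ (x' - 3 * y) %% 12 = 5)%Z by lia.
  by exists false.
by exists true; rewrite mulrN.
Qed.

Lemma phi_class_v4act g p :
  phi_class p -> phi_class (v4act g p) -> v4act g p = p.
Proof.
case: g p => [b1 b2] [x y]; rewrite /phi_class /v4act /=.
by case: b1; case: b2 => //= -[x6 xy12] [x'6 x'y12]; exfalso; lia.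
Qed.

Theorem theorem8p27 (N : nat) :
  (* phi is well defined B(N) -> U(12N+7) *)
  (forall q, inB N q -> inU (12 * N%:Z + 7) (phi q)) /\
  (* (1) the V4 action on U(12N+7) is free *)
  (forall (u : int * int) (g : V4), inU (12 * N%:Z + 7) u ->
     v4act g u = u -> g = v4_one) /\
  (* (2) phi(B(N)) is a complete set of representatives of the V4-orbits *)
  (forall u, inU (12 * N%:Z + 7) u ->
     exists q, inB N q /\ same_orbit u (phi q)) /\
  (forall q q', inB N q -> inB N q' ->
     same_orbit (phi q) (phi q') -> phi q = phi q').
Proof.
have M7 : ((12 * N%:Z + 7) %% 12 = 7)%Z by lia.
split; first by move=> q /inU_phi.
split.
  move=> u g /(inU_mod M7) [x6 y_odd]; apply: v4act_free; lia.
split.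
  move=> u uU; have [x6 y_odd] := inU_mod M7 uU.
  have [g /phi_classP [q gu]] := v4act_into_phi_class x6 y_odd.
  exists q; split; last by exists g.
  by apply/inU_phi; rewrite -gu; apply: inU_v4act.
move=> q q' _ _ [g q'g]; rewrite q'g phi_class_v4act //.
  by apply/phi_classP; exists q.
by rewrite -q'g; apply/phi_classP; exists q'.
Qed.
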